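(* Let $z=(z_1,\ldots,z_n)$ be a sequence of nonnegative real numbers, and let $f_z(a)=\sum_{i=1}^n |z_i-a_i|$ for $a\in\mathbb{R}^n$. Let $d\in DS_n$ be a minimizer of $f_z$ over $DS_n$. Then there exists $d^*\in DS_n$ such that $d^*_i\le \lceil z_i\rceil$ for all $i$ and $f_z(d^* )=f_z(d)$.
   Context: All graphs are simple (no loops, no multiple edges) on the vertex set $\{1,\ldots,n\}$. The degree sequence of such a graph is the vector $(d_1,\ldots,d_n)$ where $d_i$ is the number of neighbours of vertex $i$. $DS_n$ denotes the set of all degree sequences of simple graphs on $\{1,\ldots,n\}$. $\lceil x\rceil$ is the ceiling of $x$. *)

From mathcomp Require Import all_boot all_order all_algebra.
From mathcomp Require Import reals.
Set Implicit Arguments. Unset Strict Implicit. Unset Printing Implicit Defensive.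
Import Order.TTheory GRing.Theory Num.Theory.
Local Open Scope ring_scope.

Definition simple_graph (n : nat) (e : rel 'I_n) : Prop :=
  irreflexive e /\ symmetric e.

Definition degree (n : nat) (e : rel 'I_n) (i : 'I_n) : nat :=
  #|[pred j | e i j]|.

Definition is_degseq (n : nat) (d : 'I_n -> nat) : Prop :=
  exists e : rel 'I_n, simple_graph e /\ forall i, d i = degree e i.

Definition fz (R : realType) (n : nat) (z : 'I_n -> R) (a : 'I_n -> nat) : R :=
  \sum_(i < n) `|z i - (a i)%:R|.

From mathcomp Require Import all_boot all_order all_algebra.
From mathcomp Require Import reals.
From mathcomp Require Import lra.
Import Order.TTheory GRing.Theory Num.Theory.
Set Implicit Arguments. Unset Strict Implicit.
Local Open Scope ring_scope.

(* While some vertex i has degree above ceil(z_i) >= 0, it has a neighbour j;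
   deleting the edge ij lowers d_i by one without going below z_i, so
   |z_i - d_i| drops by exactly 1, while |z_j - d_j| grows by at most 1.
   Hence f_z does not increase, and since the number of edges decreases this
   terminates in a degree sequence bounded by ceil(z), whose f_z value is at
   most f_z(d), hence equal to it by minimality of d. *)

Definition rem_edge (n : nat) (e : rel 'I_n) (a b : 'I_n) : rel 'I_n :=
  fun x y => e x y && ~~ ([&& x == a & y == b] || [&& x == b & y == a]).

Lemma rem_edgeC n (e : rel 'I_n) a b : rem_edge e a b =2 rem_edge e b a.
Proof. by move=> x y; rewrite /rem_edge orbC. Qed.

Lemma rem_edge_simple n (e : rel 'I_n) a b :
  simple_graph e -> simple_graph (rem_edge e a b).
Proof.
case=> irr sym; split=> [x | x y]; first by rewrite /rem_edge irr.
by rewrite /rem_edge sym orbC [(x == a) && _]andbC [(x == b) && _]andbC.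
Qed.

Lemma degree_rem_edge_le n (e : rel 'I_n) a b k :
  (degree (rem_edge e a b) k <= degree e k)%N.
Proof. by apply/subset_leq_card/subsetP => y; rewrite !inE => /andP[]. Qed.

Lemma degree_rem_edge_other n (e : rel 'I_n) a b k :
  k != a -> k != b -> degree (rem_edge e a b) k = degree e k.
Proof.
move=> /negbTE ka /negbTE kb; apply: eq_card => y.
by rewrite !inE /rem_edge ka kb andbT.
Qed.

Lemma degree_rem_edge_l n (e : rel 'I_n) a b : a != b -> e a b ->
  degree e a = (degree (rem_edge e a b) a).+1.
Proof.
move=> ab eab; rewrite /degree (cardD1 b) inE eab add1n; congr _.+1.
apply: eq_card => y; rewrite !inE /rem_edge eqxx (negbTE ab) orbF.
by rewrite andbC.
Qed.

Lemma degree_rem_edge_r n (e : rel 'I_n) a b : a != b -> e b a ->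
  degree e b = (degree (rem_edge e a b) b).+1.
Proof.
rewrite eq_sym => ba /(degree_rem_edge_l ba) ->; congr _.+1.
by apply: eq_card => y; rewrite !inE rem_edgeC.
Qed.

Lemma sum_degree_rem_edge n (e : rel 'I_n) a b : a != b -> e a b ->
  (\sum_(k < n) degree (rem_edge e a b) k < \sum_(k < n) degree e k)%N.
Proof.
move=> ab eab; rewrite [ltnRHS](bigD1 a) //= (degree_rem_edge_l ab eab).
rewrite (bigD1 a) //= addSn ltnS leq_add2l.
by apply: leq_sum => k _; exact: degree_rem_edge_le.
Qed.

Lemma fz_le_pair (R : realType) n (z : 'I_n -> R) (a b : 'I_n -> nat) i j :
  i != j -> (forall k, k != i -> k != j -> a k = b k) ->
  b i = (a i).+1 -> b j = (a j).+1 -> z i <= (a i)%:R ->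
  fz z a <= fz z b.
Proof.
move=> ij ab_eq bi bj zi.
have ji : j != i by rewrite eq_sym.
rewrite /fz (bigD1 i) //= [in X in _ <= X](bigD1 i) //=.
rewrite (bigD1 j) //= [in X in _ <= X](bigD1 j) //=.
rewrite (eq_bigr (fun k => `|z k - (b k)%:R|)); last first.
  by move=> k /andP[ki kj]; rewrite ab_eq.
rewrite bi bj -!natr1; set S := \sum_(k | _) _.
have hi x : z i <= x -> `|z i - x| = x - z i.
  by move=> zx; rewrite distrC ger0_norm ?subr_ge0.
have hj : `|z j - (a j)%:R| <= `|z j - ((a j)%:R + 1)| + 1.
  apply: le_trans (ler_distD ((a j)%:R + 1) _ _) _.
  by rewrite addrAC subrr add0r normr1.
rewrite !hi //; last by lra.
lra.
Qed.

Lemma remove_excess_edge (R : realType) n (z : 'I_n -> R) (e : rel 'I_n) i :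
  0 <= z i -> simple_graph e ->
  Num.ceil (z i) < (degree e i)%:Z ->
  exists e', [/\ simple_graph e',
    (\sum_(k < n) degree e' k < \sum_(k < n) degree e k)%N &
    fz z (degree e') <= fz z (degree e)].
Proof.
move=> zi_ge0 [irr sym] hi.
have /card_gt0P[j] : (0 < degree e i)%N.
  by rewrite -(ltz_nat 0) (le_lt_trans _ hi) // ceil_ge0 (lt_le_trans _ zi_ge0) ?ltrN10.
rewrite inE => eij.
have ij : i != j by apply: contraTneq eij => ->; rewrite irr.
have eji : e j i by rewrite sym.
exists (rem_edge e i j); split.
- exact: rem_edge_simple.
- exact: sum_degree_rem_edge.
- apply: (fz_le_pair ij) => [k ki kj|||].
  + exact: degree_rem_edge_other.
  + exact: degree_rem_edge_l.
  + exact: degree_rem_edge_r.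
  + have : Num.ceil (z i) <= (degree (rem_edge e i j) i)%:Z.
      by rewrite -ltzD1 addrC -intS -degree_rem_edge_l.
    by rewrite (ceil_le_int (z i)).
Qed.

Lemma reduce_to_ceil_degrees (R : realType) n (z : 'I_n -> R) (e : rel 'I_n) :
  (forall k, 0 <= z k) -> simple_graph e ->
  exists e', [/\ simple_graph e',
    (forall k, (degree e' k)%:Z <= Num.ceil (z k)) &
    fz z (degree e') <= fz z (degree e)].
Proof.
move=> hz; have [m] := ubnP (\sum_(k < n) degree e k).
elim: m e => // m IH e sum_lt se.
have [i hi|small] := pickP (fun k => Num.ceil (z k) < (degree e k)%:Z); last first.
  by exists e; split=> // k; rewrite leNgt small.
have [e1 [se1 lt1 le1]] := remove_excess_edge (hz i) se hi.
have [e' [se' small le']] := IH e1 (leq_trans lt1 sum_lt) se1.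
by exists e'; split=> //; apply: le_trans le1.
Qed.

Theorem lemma5 (R : realType) (n : nat) (z : 'I_n -> R)
  (hz : forall i, 0 <= z i)
  (d : 'I_n -> nat) (hd : is_degseq d)
  (hmin : forall d' : 'I_n -> nat, is_degseq d' -> fz z d <= fz z d') :
  exists dstar : 'I_n -> nat,
    [/\ is_degseq dstar,
        (forall i, (dstar i)%:Z <= Num.ceil (z i))%R
      & fz z dstar = fz z d].
Proof.
case: hd => e [se hde].
have fz_d : fz z (degree e) = fz z d by apply: eq_bigr => k _; rewrite hde.
have [e' [se' small le']] := reduce_to_ceil_degrees hz se.
have ds' : is_degseq (degree e') by exists e'.
by exists (degree e'); split=> //; apply/eqP; rewrite eq_le hmin // -fz_d le'.
Qed.
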